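(* Fix a transcript whose feasible region $\Phi_T$ is nonempty and bounded. For every function $\hat G:S^{d-1}\to\mathbb{R}$, \[ \sup_{x\in\Phi_T}\ \sup_{v\in S^{d-1}}\bigl|\hat G(v)-\langle x,v\rangle\bigr|\;\ge\;\tfrac12\,\mathrm{diam}(\Phi_T), \] with equality for the rule $\hat G(v)=\tfrac12\bigl(\sup_{x\in\Phi_T}\langle x,v\rangle+\inf_{x\in\Phi_T}\langle x,v\rangle\bigr)$. Consequently $\mathrm{OPT}^{\mathrm{improper}}_d(T,\delta)=\inf_{\mathcal R}\sup\tfrac12\mathrm{diam}(\Phi_T)$, the supremum being over all transcripts produced by $\mathcal R$ with answers chosen online arbitrarily subject to $\Phi_T\neq\emptyset$.
   Context: Improper linear reconstruction game: fix $d\ge1$, $T\ge0$, $\delta>0$. An adversary holds a secret $x^*\in\mathbb{R}^d$; in each round $t=1,\dots,T$ the reconstructor (possibly adaptively) chooses $v_t\in S^{d-1}$ and receives $r_t\in\mathbb{R}$ with $|r_t-\langle x^*,v_t\rangle|\le\delta$. After $T$ rounds the reconstructor outputs a function $\hat G_T:S^{d-1}\to\mathbb{R}$. All strategies are deterministic. $\mathrm{OPT}^{\mathrm{improper}}_d(T,\delta)=\inf_{\mathcal R}\sup_{x^*}\sup_{\mathcal A}\sup_{v\in S^{d-1}}|\hat G_T(v)-\langle x^*,v\rangle|$, the infimum over improper reconstructor strategies and the suprema over secrets and adversary answer strategies consistent with the secret. The feasible region is $\Phi_T=\{x\in\mathbb{R}^d: |\langle x,v_t\rangle-r_t|\le\delta\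 \forall t\in[T]\}$; $\mathrm{diam}(A)=\sup_{x,y\in A}\|x-y\|_2$. *)

From HB Require Import structures.
From mathcomp Require Import all_boot all_order all_algebra.
From mathcomp Require Import all_classical all_reals ereal.
Set Implicit Arguments. Unset Strict Implicit. Unset Printing Implicit Defensive.
Import Order.TTheory GRing.Theory Num.Theory.
Local Open Scope classical_set_scope.
Local Open Scope ring_scope.

Section Defs.
Variables (R : realType) (d : nat).

Definition dotp (x y : 'rV[R]_d) : R := \sum_(i < d) x ord0 i * y ord0 i.
Definition norm2 (x : 'rV[R]_d) : R := Num.sqrt (dotp x x).
Definition sphere : set 'rV[R]_d := [set v | norm2 v = 1].

(* a transcript is a sequence of (query, answer) pairs *)
Definition transcript := seq ('rV[R]_d * R).

Definition feasible (delta : R) (h : transcript) : set 'rV[R]_d :=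
  [set x | forall p, p \in h -> `|dotp x p.1 - p.2| <= delta].

Definition bounded_set (A : set 'rV[R]_d) : Prop :=
  exists M : R, forall x, A x -> norm2 x <= M.

Definition diam (A : set 'rV[R]_d) : \bar R :=
  ereal_sup [set e | exists x y, A x /\ A y /\ e = (norm2 (x - y))%:E].

Definition worst_err (A : set 'rV[R]_d) (G : 'rV[R]_d -> R) : \bar R :=
  ereal_sup [set e | exists x v, A x /\ sphere v /\ e = (`|G v - dotp x v|)%:E].

Definition midpoint_rule (A : set 'rV[R]_d) (v : 'rV[R]_d) : R :=
  (sup [set dotp x v | x in A] + inf [set dotp x v | x in A]) / 2.

(* deterministic adaptive improper reconstructor: next query as a function of
   the history, and the final output as a function of the full transcript *)
Record reconstructor := Reconstructor {
  rquery : transcript -> 'rV[R]_d;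
  routput : transcript -> ('rV[R]_d -> R) }.

Definition valid_reconstructor (Rc : reconstructor) : Prop :=
  forall h, sphere (rquery Rc h).

(* deterministic adversary: answer as a function of the history and the
   current query *)
Definition adversary := transcript -> 'rV[R]_d -> R.

Fixpoint play (Rc : reconstructor) (A : adversary) (k : nat) : transcript :=
  match k with
  | 0 => [::]
  | k'.+1 => let h := play Rc A k' in
             let v := rquery Rc h in rcons h (v, A h v)
  end.

Definition consistent_adv (delta : R) (xs : 'rV[R]_d) (Rc : reconstructor)
  (A : adversary) (T : nat) : Prop :=
  forall p, p \in play Rc A T -> `|p.2 - dotp xs p.1| <= delta.

Definition rec_error (T : nat) (delta : R) (Rc : reconstructor) : \bar R :=
  ereal_sup [set e | exists xs A v, consistent_adv delta xs Rc A T /\ sphere v /\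
     e = (`|routput Rc (play Rc A T) v - dotp xs v|)%:E].

Definition OPT_improper (T : nat) (delta : R) : \bar R :=
  ereal_inf [set e | exists Rc, valid_reconstructor Rc /\ e = rec_error T delta Rc].

Definition half_diam_value (T : nat) (delta : R) : \bar R :=
  ereal_inf [set e | exists Rc, valid_reconstructor Rc /\
    e = ereal_sup [set f | exists A : adversary,
          feasible delta (play Rc A T) !=set0 /\
          f = ((2%:R)^-1%:E * diam (feasible delta (play Rc A T)))%E]].

End Defs.

Arguments dotp {R d}.
Arguments norm2 {R d}.
Arguments sphere {R d}.
Arguments feasible {R d}.
Arguments bounded_set {R d}.
Arguments diam {R d}.
Arguments worst_err {R d}.
Arguments midpoint_rule {R d}.
Arguments OPT_improper {R} d.
Arguments half_diam_value {R} d.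

From HB Require Import structures.
From mathcomp Require Import all_boot all_order all_algebra.
From mathcomp Require Import all_classical all_reals ereal.
From mathcomp Require Import ring lra.
Import Order.TTheory GRing.Theory Num.Theory.
Local Open Scope classical_set_scope.
Local Open Scope ring_scope.

(* For x, y in the region and the unit direction v of x - y, the projections
   <x,v> and <y,v> are |x - y| apart, so any value G v misses one of them by
   at least |x - y| / 2.  Conversely, by Cauchy-Schwarz the projections of the
   region on a unit direction v fill an interval of width at most its diameter,
   whose midpoint is within half that width of each of them.  In the game the
   output of any reconstructor can be replaced by this midpoint rule without
   changing its queries, and the secrets consistent with a play are exactly the
   points of its feasible region. *)

Section Geometry.
Context {R : realType} {d : nat}.
Implicit Types (x y z u : 'rV[R]_d) (a : R).

Lemma dotpC x y : dotp x y = dotp y x.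
Proof. by apply: eq_bigr => i _; rewrite mulrC. Qed.

Lemma dotpBl x y z : dotp (x - y) z = dotp x z - dotp y z.
Proof. by rewrite /dotp -sumrB; apply: eq_bigr => i _; rewrite !mxE mulrBl. Qed.

Lemma dotpZl a x z : dotp (a *: x) z = a * dotp x z.
Proof. by rewrite /dotp mulr_sumr; apply: eq_bigr => i _; rewrite !mxE mulrA. Qed.

Lemma dotp_ge0 x : 0 <= dotp x x.
Proof. by apply: sumr_ge0 => i _; rewrite -expr2 sqr_ge0. Qed.

Lemma norm2_ge0 x : 0 <= norm2 x.
Proof. exact: sqrtr_ge0. Qed.

Lemma sqr_norm2 x : norm2 x ^+ 2 = dotp x x.
Proof. by rewrite sqr_sqrtr // dotp_ge0. Qed.

Lemma dotp_sphere u : sphere u -> dotp u u = 1.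
Proof. by move=> su; rewrite -sqr_norm2 su expr1n. Qed.

Lemma norm_dotp_sphere_le z u : sphere u -> `|dotp z u| <= norm2 z.
Proof.
move=> su; set t := dotp z u.
have proj_ge0 := dotp_ge0 (z - t *: u).
rewrite dotpBl dotpZl !(dotpC _ (z - t *: u)) !dotpBl !dotpZl
  (dotp_sphere _ su) (dotpC u z) -/t in proj_ge0.
rewrite -sqrtr_sqr /norm2 ler_sqrt ?dotp_ge0 //; lra.
Qed.

Lemma sphere_normalize x : 0 < norm2 x -> sphere ((norm2 x)^-1 *: x).
Proof.
move=> x_gt0; rewrite /sphere /= [LHS]/norm2 dotpZl dotpC dotpZl -sqr_norm2.
by rewrite mulrA -expr2 exprVn mulrC mulfV ?sqrtr1 // expf_neq0 ?gt_eqF.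
Qed.

Lemma dotp_normalize x : 0 < norm2 x -> dotp x ((norm2 x)^-1 *: x) = norm2 x.
Proof.
move=> x_gt0; rewrite dotpC dotpZl -sqr_norm2 expr2 mulrA mulVf ?mul1r //.
by rewrite gt_eqF.
Qed.

Lemma sphere_nonempty : (0 < d)%N -> @sphere R d !=set0.
Proof.
move=> d_gt0; pose w : 'rV[R]_d := const_mx 1.
have dotp_w : dotp w w = d%:R.
  rewrite /dotp (eq_bigr (fun _ => 1)) ?sumr_const ?card_ord //.
  by move=> i _; rewrite !mxE mulr1.
by exists ((norm2 w)^-1 *: w); apply: sphere_normalize; rewrite sqrtr_gt0 dotp_w ltr0n.
Qed.

Lemma norm2_sub_ge x y : norm2 x - norm2 y <= norm2 (x - y).
Proof.
have [x0|x_neq0] := eqVneq (norm2 x) 0.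
  by rewrite x0 sub0r lerNl (le_trans _ (norm2_ge0 _)) // oppr_le0 norm2_ge0.
have x_gt0 : 0 < norm2 x by rewrite lt_def x_neq0 norm2_ge0.
have su := sphere_normalize _ x_gt0.
have := norm_dotp_sphere_le (x - y) _ su; rewrite dotpBl dotp_normalize //.
have := norm_dotp_sphere_le y _ su.
set p := dotp y _ => py pxy.
have := ler_norm (norm2 x - p); have := ler_norm p; lra.
Qed.

End Geometry.

Section Error.
Context {R : realType} {d : nat}.
Implicit Types (A : set 'rV[R]_d) (G : 'rV[R]_d -> R).
Local Open Scope ereal_scope.

Lemma diam_ge0 A x : A x -> 0 <= diam A.
Proof.
move=> Ax; apply: (@le_trans _ _ (norm2 (x - x))%:E).
  by rewrite lee_fin norm2_ge0.
by apply: ereal_sup_ubound; exists x, x.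
Qed.

Lemma unbounded_diam A x : A x -> ~ bounded_set A -> diam A = +oo.
Proof.
move=> Ax A_unbounded; apply: eq_infty => r.
have [y [Ay y_big]] : exists y, A y /\ (`|r| + norm2 x < norm2 y)%R.
  apply: contrapT => no_big; apply: A_unbounded; exists (`|r| + norm2 x)%R.
  by move=> y Ay; rewrite leNgt; apply/negP => y_big; apply: no_big; exists y.
apply: (@le_trans _ _ (norm2 (y - x))%:E); last by apply: ereal_sup_ubound; exists y, x.
have := norm2_sub_ge y x; have := ler_norm r; rewrite lee_fin; lra.
Qed.

(* [0 < d] makes the sphere nonempty, so that [worst_err] is not [-oo]. *)
Lemma half_dist_le_worst_err A G x y : (0 < d)%N -> A x -> A y ->
  (2^-1 * norm2 (x - y))%R%:E <= worst_err A G.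
Proof.
move=> d_gt0 Ax Ay; have [xy0|xy_neq0] := eqVneq (norm2 (x - y)) 0%R.
  have [v sv] := sphere_nonempty (R := R) d_gt0.
  rewrite xy0 mulr0; apply: (@le_trans _ _ (`|G v - dotp x v|)%R%:E).
    by rewrite lee_fin.
  by apply: ereal_sup_ubound; exists x, v.
have xy_gt0 : (0 < norm2 (x - y))%R by rewrite lt_def xy_neq0 norm2_ge0.
have sv := sphere_normalize _ xy_gt0; have gap := dotp_normalize _ xy_gt0.
set v := (_ *: _) in sv gap; rewrite dotpBl in gap.
have err_x : (`|G v - dotp x v|)%R%:E <= worst_err A G.
  by apply: ereal_sup_ubound; exists x, v.
have err_y : (`|G v - dotp y v|)%R%:E <= worst_err A G.
  by apply: ereal_sup_ubound; exists y, v.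
have := ler_norm (G v - dotp y v).
have := ler_norm (- (G v - dotp x v)); rewrite normrN.
case: (leP (`|G v - dotp x v|)%R (`|G v - dotp y v|)%R) => cmp px py.
  by apply: le_trans err_y; rewrite lee_fin; lra.
by apply: le_trans err_x; rewrite lee_fin; lra.
Qed.

Lemma half_diam_le_worst_err A G : (0 < d)%N ->
  (2^-1)%R%:E * diam A <= worst_err A G.
Proof.
move=> d_gt0; rewrite -(lee_pmul2l (x := 2%:E)) ?lte_fin //.
rewrite muleA -EFinM mulfV ?pnatr_eq0 // mul1e.
apply: ge_ereal_sup => _ [x [y [Ax [Ay ->]]]].
rewrite -(lee_pmul2l (x := (2^-1)%R%:E)) ?lte_fin ?invr_gt0 //.
rewrite muleA -!EFinM mulVf ?pnatr_eq0 // mul1e.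
exact: half_dist_le_worst_err.
Qed.

Lemma sup_sub_inf_le (S : set R) (r : R) : S !=set0 -> has_ubound S ->
  has_lbound S -> (forall s t, S s -> S t -> s - t <= r)%R ->
  (sup S - inf S <= r)%R.
Proof.
move=> S0 Sub Slb Sr; rewrite lerBlDr -lerBlDl.
apply: lb_le_inf => // t St; rewrite lerBlDr.
by apply: ge_sup => // s Ss; rewrite -lerBlDl; apply: Sr.
Qed.

Lemma worst_err_midpoint_bounded_le A x : A x -> bounded_set A ->
  worst_err A (midpoint_rule A) <= (2^-1)%R%:E * diam A.
Proof.
move=> Ax [M normM]; apply: ge_ereal_sup => _ [y [v [Ay [sv ->]]]].
set S := [set dotp z v | z in A].
have projM z : A z -> (`|dotp z v| <= M)%R.
  by move=> Az; apply: le_trans (norm_dotp_sphere_le z _ sv) (normM _ Az).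
have S0 : S !=set0 by exists (dotp x v), x.
have Sub : has_ubound S.
  by exists M => _ [z Az <-]; apply: le_trans (ler_norm _) (projM _ Az).
have Slb : has_lbound S.
  exists (- M)%R => _ [z Az <-]; rewrite lerNl.
  by apply: le_trans (ler_norm _) _; rewrite normrN projM.
have y_le_sup : (dotp y v <= sup S)%R by apply: ub_le_sup => //; exists y.
have inf_le_y : (inf S <= dotp y v)%R by apply: ge_inf => //; exists y.
rewrite /midpoint_rule -/S.
case Ediam : (diam A) => [r| |]; last by have := diam_ge0 _ _ Ax; rewrite Ediam.
  have width : (sup S - inf S <= r)%R.
    apply: sup_sub_inf_le => // _ _ [z Az <-] [w Aw <-].
    have : (norm2 (z - w))%:E <= diam A by apply: ereal_sup_ubound; exists z, w.
    rewrite Ediam lee_fin -dotpBl; apply: le_trans.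
    exact: le_trans (ler_norm _) (norm_dotp_sphere_le _ _ sv).
  by rewrite -EFinM lee_fin ler_norml; apply/andP; split; lra.
by rewrite muleC gt0_mulye ?leey // lte_fin invr_gt0.
Qed.

Lemma worst_err_midpoint_le A x : A x ->
  worst_err A (midpoint_rule A) <= (2^-1)%R%:E * diam A.
Proof.
move=> Ax; have [A_bounded|A_unbounded] := pselect (bounded_set A).
  exact: worst_err_midpoint_bounded_le _ _ Ax A_bounded.
by rewrite (unbounded_diam _ _ Ax A_unbounded) muleC gt0_mulye ?leey // lte_fin invr_gt0.
Qed.

End Error.

Section Game.
Context {R : realType} {d : nat} (T : nat) (delta : R).
Implicit Types (Rc : reconstructor R d) (A : adversary R d).
Local Open Scope ereal_scope.

Lemma play_rquery Rc1 Rc2 A k :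
  rquery Rc1 = rquery Rc2 -> play Rc1 A k = play Rc2 A k.
Proof. by move=> same_query; elim: k => //= k ->; rewrite same_query. Qed.

Lemma consistent_advE xs Rc A :
  consistent_adv delta xs Rc A T <-> feasible delta (play Rc A T) xs.
Proof. by split=> feas p hp; rewrite distrC; apply: feas. Qed.

Definition worst_half_diam Rc : \bar R :=
  ereal_sup [set f | exists A : adversary R d,
    feasible delta (play Rc A T) !=set0 /\
    f = ((2%:R)^-1%:E * diam (feasible delta (play Rc A T)))%E].

Definition midpoint_reconstructor Rc : reconstructor R d :=
  Reconstructor (rquery Rc) (fun h => midpoint_rule (feasible delta h)).

Lemma worst_half_diam_le_rec_error Rc : (0 < d)%N ->
  worst_half_diam Rc <= rec_error T delta Rc.
Proof.
move=> d_gt0; apply: ge_ereal_sup => _ [A [_ ->]].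
apply: le_trans (half_diam_le_worst_err _ (routput Rc (play Rc A T)) d_gt0) _.
apply: ge_ereal_sup => _ [x [v [feas [sv ->]]]].
by apply: ereal_sup_ubound; exists x, A, v; rewrite consistent_advE.
Qed.

Lemma rec_error_midpoint_le Rc :
  rec_error T delta (midpoint_reconstructor Rc) <= worst_half_diam Rc.
Proof.
apply: ge_ereal_sup => _ [xs [A [v [/consistent_advE feas [sv ->]]]]].
rewrite /= (play_rquery _ Rc) // in feas *.
apply: (@le_trans _ _ (worst_err (feasible delta (play Rc A T))
   (midpoint_rule (feasible delta (play Rc A T))))).
  by apply: ereal_sup_ubound; exists xs, v.
apply: le_trans (worst_err_midpoint_le _ _ feas) _.
by apply: ereal_sup_ubound; exists A; split => //; exists xs.
Qed.

End Game.

Theorem mainTheorem18 (R : realType) (d T : nat) (delta : R) :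
  (1 <= d)%N -> 0 < delta ->
  (forall h : transcript R d,
     size h = T ->
     (forall p, p \in h -> sphere p.1) ->
     feasible delta h !=set0 ->
     bounded_set (feasible delta h) ->
     (forall G : 'rV[R]_d -> R,
        ((2%:R)^-1%:E * diam (feasible delta h) <= worst_err (feasible delta h) G)%E) /\
     worst_err (feasible delta h) (midpoint_rule (feasible delta h))
       = ((2%:R)^-1%:E * diam (feasible delta h))%E) /\
  OPT_improper d T delta = half_diam_value d T delta.
Proof.
move=> d_gt0 _; split.
  move=> h _ _ [x feas] _; split=> [G|].
    exact: half_diam_le_worst_err.
  apply/eqP; rewrite eq_le half_diam_le_worst_err // andbT.
  exact: worst_err_midpoint_le _ _ feas.
apply/eqP; rewrite eq_le; apply/andP; split.
  apply: le_ereal_inf_tmp => _ [Rc [Rc_valid ->]].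
  apply: le_trans (rec_error_midpoint_le T delta Rc).
  by apply: ereal_inf_lbound; exists (midpoint_reconstructor delta Rc).
apply: le_ereal_inf_tmp => _ [Rc [Rc_valid ->]].
apply: le_trans (worst_half_diam_le_rec_error T delta Rc d_gt0).
by apply: ereal_inf_lbound; exists Rc.
Qed.
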